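(* Assume (B1)–(B3), that $f\in C^2$, that $\int_0^{+\infty}e^{-f(s)/(\beta+1)}ds<\infty$, and that $\lim_{t\to+\infty}g''(t)/g'(t)=0$ where $g=f^{-1}$. Then $I(u(\varepsilon_\rho s,\rho))\to\beta+1$ as $\rho\to+\infty$, uniformly for $s$ in compact subsets of $[0,\infty)$.
   Context: $L(u)(r)=r^{-\gamma}(r^{\alpha}|u'|^{\beta}u')'$, $\theta=\gamma+2+\beta-\alpha$. (B1) $f\in C^1(\mathbb R,\mathbb R)$, $f'>0$, $f\to+\infty$. (B2) $\lim_{u\to+\infty}u^{-1}e^{f(u)/(\beta+1)}=\lim_{u\to+\infty}uf'(u)=+\infty$. (B3) $\alpha>\beta+1>0$, $\theta>0$. $u(\cdot,\rho)$: solution on $[0,\infty)$ of $L(u)+e^{f(u)}=0$, $u(0)=\rho$, $u'(0)=0$. $\mathcal F(u)=\int_u^{\infty}e^{-f(s)/(\beta+1)}ds$, $\mathcal F_1(u)=(\beta+1)e^{-u/(\beta+1)}$, $\varepsilon_\rho=(\mathcal F(\rho)/\mathcal F_1(1))^{(\beta+1)/\theta}$, $I(u)=\mathcal F(u)f'(u)e^{f(u)/(\beta+1)}$. *)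

From Stdlib Require Import Reals.
From Coquelicot Require Import Coquelicot.
Open Scope R_scope.

Definition phi (beta x : R) : R :=
  if Req_EM_T x 0 then 0 else Rpower (Rabs x) beta * x.

Definition theta (alpha beta gamma : R) : R := gamma + 2 + beta - alpha.

(* u is a solution on [0,oo) of  r^{-gamma} (r^alpha |u'|^beta u')' + e^{f(u)} = 0,
   u(0) = rho, u'(0) = 0.  (u is C^1 on [0,oo), r^alpha|u'|^beta u' is
   differentiable on (0,oo) and the equation holds there.) *)
Definition is_solution (alpha beta gamma : R) (f : R -> R) (rho : R) (u : R -> R) : Prop :=
  u 0 = rho /\
  filterlim u (at_right 0) (locally rho) /\
  (forall r, 0 < r -> ex_derive u r) /\
  filterlim (Derive u) (at_right 0) (locally 0) /\
  (forall r, 0 < r ->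
     is_derive (fun t => Rpower t alpha * phi beta (Derive u t)) r
               (- (Rpower r gamma * exp (f (u r))))).

Definition Fint (beta : R) (f : R -> R) (s : R) : R := exp (- f s / (beta + 1)).

Definition Fcal (beta : R) (f : R -> R) (u : R) : R :=
  RInt_gen (Fint beta f) (at_point u) (Rbar_locally p_infty).

Definition Fcal1 (beta : R) (u : R) : R := (beta + 1) * exp (- u / (beta + 1)).

Definition eps_rho (alpha beta gamma : R) (f : R -> R) (rho : R) : R :=
  Rpower (Fcal beta f rho / Fcal1 beta 1) ((beta + 1) / theta alpha beta gamma).

Definition Ical (beta : R) (f : R -> R) (u : R) : R :=
  Fcal beta f u * Derive f u * exp (f u / (beta + 1)).

From Stdlib Require Import Reals Lra.
From Coquelicot Require Import Coquelicot.
Open Scope R_scope.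

(* Write b = beta + 1, a = theta / b and q = f'' / f'^2.

   The function h(v) = e^{-f(v)/b} / f'(v) satisfies
      h' = - e^{-f/b} (1/b + q) and, by (B2), h(v) -> 0 as v -> +oo.  Integrating
      h' over [v, +oo) shows that F(v) is squeezed between h(v) / (1/b + d) and
      h(v) / (1/b - d) as soon as |q| <= d on [v, +oo).  Since I = F / h and
      q(x) = - (g''/g')(f(x)) tends to 0 (inverse-function rule), I(v) -> b.
   2. A priori bound for the ODE.  Integrating the equation from 0 shows that the
      flux r^alpha |u'|^beta u' is nonpositive, so u <= rho, hence e^{f(u)} <= e^{f(rho)}
      and the flux is at least - e^{f(rho)} r^{gamma+1} / (gamma + 1).  Solving for u'
      and integrating again gives rho - u(r) <= K e^{f(rho)/b} r^a / a.
   3. Rescaling.  For r = eps_rho s one has r^a = F(rho) s^a / F_1(1) and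
      e^{f(rho)/b} F(rho) = I(rho) / f'(rho), so rho - u(eps_rho s) = O(1 / f'(rho)),
      which is o(rho) by (B2).  Thus u(eps_rho s, rho) -> +oo uniformly for
      s in [0, S], and step 1 concludes. *)

(* Rpower x y = exp (y ln x) is positive for every x (Stdlib convention ln x = 0 for x <= 0). *)
Lemma Rpower_pos (x y : R) : 0 < Rpower x y.
Proof. apply exp_pos. Qed.

Lemma continuity_pt_of_ex_derive (h : R -> R) (x : R) :
  ex_derive h x -> continuity_pt h x.
Proof.
  intro H. apply continuity_pt_filterlim, (ex_derive_continuous h x H).
Qed.

Lemma nondecreasing_of_nonneg_derive (h dh : R -> R) (a b : R) :
  (forall t, a < t <= b -> is_derive h t (dh t)) ->
  (forall t, a < t <= b -> 0 <= dh t) ->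
  forall t, a < t <= b -> h t <= h b.
Proof.
  intros Hd Hpos t Ht.
  destruct (Req_dec t b) as [-> | Htb]; [lra |].
  destruct (MVT_gen h t b dh) as [c [Hc Hmvt]];
    rewrite ?Rmin_left, ?Rmax_right in * by lra.
  - intros x Hx. apply Hd. lra.
  - intros x Hx. apply continuity_pt_of_ex_derive. eexists. apply Hd. lra.
  - assert (0 <= dh c) by (apply Hpos; lra). nra.
Qed.

Lemma strictly_increasing_of_pos_derive (h : R -> R) :
  (forall x, ex_derive h x) -> (forall x, 0 < Derive h x) ->
  forall a b, a < b -> h a < h b.
Proof.
  intros Hd Hpos a b Hab.
  destruct (MVT_gen h a b (Derive h)) as [c [Hc Hmvt]].
  - intros x _. apply Derive_correct, Hd.
  - intros x _. apply continuity_pt_of_ex_derive, Hd.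
  - specialize (Hpos c). nra.
Qed.

Lemma lim_right_0_plus (m1 m2 : R -> R) (l1 l2 : R) :
  filterlim m1 (at_right 0) (locally l1) -> filterlim m2 (at_right 0) (locally l2) ->
  filterlim (fun t => m1 t + m2 t) (at_right 0) (locally (l1 + l2)).
Proof.
  intros H1 H2. exact (filterlim_comp_2 m1 m2 Rplus H1 H2 (filterlim_plus (V := R_NormedModule) l1 l2)).
Qed.

Lemma lim_right_0_mult (m1 m2 : R -> R) (l1 l2 : R) :
  filterlim m1 (at_right 0) (locally l1) -> filterlim m2 (at_right 0) (locally l2) ->
  filterlim (fun t => m1 t * m2 t) (at_right 0) (locally (l1 * l2)).
Proof.
  intros H1 H2. exact (filterlim_comp_2 m1 m2 Rmult H1 H2 (filterlim_mult (K := R_AbsRing) l1 l2)).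
Qed.

Lemma lim_right_0_scal (c : R) (m : R -> R) (l : R) :
  filterlim m (at_right 0) (locally l) ->
  filterlim (fun t => c * m t) (at_right 0) (locally (c * l)).
Proof.
  intro H. apply lim_right_0_mult; [apply filterlim_const | exact H].
Qed.

Lemma lim_right_0_opp (m : R -> R) (l : R) :
  filterlim m (at_right 0) (locally l) ->
  filterlim (fun t => - m t) (at_right 0) (locally (- l)).
Proof.
  intro H. exact (filterlim_comp _ _ _ m Ropp _ _ _ H (filterlim_opp (V := R_NormedModule) l)).
Qed.

Lemma Rpower_lim_right_0 (a : R) : 0 < a ->
  filterlim (fun t => Rpower t a) (at_right 0) (locally 0).
Proof.
  intro Ha. apply filterlim_locally. intro eps.
  exists (mkposreal _ (Rpower_pos eps (/ a))). intros t Ht Htpos.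
  change (Rabs (t - 0) < Rpower eps (/ a)) in Ht.
  rewrite Rminus_0_r, Rabs_pos_eq in Ht by lra.
  change (Rabs (Rpower t a - 0) < eps).
  rewrite Rminus_0_r, Rabs_pos_eq by apply Rlt_le, Rpower_pos.
  replace (pos eps) with (Rpower (Rpower eps (/ a)) a)
    by (rewrite Rpower_mult, Rinv_l, Rpower_1; [reflexivity | apply cond_pos | lra]).
  apply Rlt_Rpower_l; lra.
Qed.

Lemma lim_right_0_le (m dm : R -> R) (l r : R) : 0 < r ->
  (forall t, 0 < t <= r -> is_derive m t (dm t)) ->
  (forall t, 0 < t <= r -> 0 <= dm t) ->
  filterlim m (at_right 0) (locally l) -> l <= m r.
Proof.
  intros Hr Hd Hpos Hlim.
  apply (filterlim_le (F := at_right 0) m (fun _ => m r) l (m r)); [| exact Hlim | apply filterlim_const].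
  exists (mkposreal r Hr). intros t Ht Htpos.
  change (Rabs (t - 0) < r) in Ht. rewrite Rminus_0_r, Rabs_pos_eq in Ht by lra.
  apply (nondecreasing_of_nonneg_derive m dm 0 r Hd Hpos). lra.
Qed.

Lemma Rabs_phi (beta x : R) : x <> 0 -> Rabs (phi beta x) = Rpower (Rabs x) (beta + 1).
Proof.
  intro Hx. unfold phi. destruct (Req_EM_T x 0) as [| _]; [contradiction |].
  rewrite Rabs_mult, Rabs_pos_eq by apply Rlt_le, Rpower_pos.
  rewrite Rpower_plus, Rpower_1 by (apply Rabs_pos_lt, Hx). reflexivity.
Qed.

Lemma phi_pos (beta x : R) : 0 < x -> 0 < phi beta x.
Proof.
  intro Hx. unfold phi. destruct (Req_EM_T x 0); [lra |].
  pose proof (Rpower_pos (Rabs x) beta). nra.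
Qed.

Lemma phi_neg (beta x : R) : x < 0 -> phi beta x = - Rpower (Rabs x) (beta + 1).
Proof.
  intro Hx. rewrite <- (Rabs_phi beta x) by lra. rewrite Rabs_left; [ring |].
  unfold phi. destruct (Req_EM_T x 0); [lra |]. pose proof (Rpower_pos (Rabs x) beta). nra.
Qed.

Lemma phi_continuous_0 (beta : R) : 0 < beta + 1 ->
  filterlim (phi beta) (locally 0) (locally 0).
Proof.
  intro Hb. apply filterlim_locally. intro eps.
  exists (mkposreal _ (Rpower_pos eps (/ (beta + 1)))). intros x Hx.
  change (Rabs (x - 0) < Rpower eps (/ (beta + 1))) in Hx. rewrite Rminus_0_r in Hx.
  change (Rabs (phi beta x - 0) < eps). rewrite Rminus_0_r.
  destruct (Req_dec x 0) as [-> | Hx0].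
  { unfold phi. destruct (Req_EM_T 0 0); [| lra]. rewrite Rabs_R0. apply cond_pos. }
  rewrite Rabs_phi by exact Hx0.
  replace (pos eps) with (Rpower (Rpower eps (/ (beta + 1))) (beta + 1))
    by (rewrite Rpower_mult, Rinv_l, Rpower_1; [reflexivity | apply cond_pos | lra]).
  apply Rlt_Rpower_l; [lra |]. split; [apply Rabs_pos_lt |]; assumption.
Qed.

Definition flux (alpha beta : R) (u : R -> R) (t : R) : R :=
  Rpower t alpha * phi beta (Derive u t).

Section SolutionLowerBound.

Variables (alpha beta gamma rho : R) (f u : R -> R).
Hypothesis f_derivable : forall x, ex_derive f x.
Hypothesis f'_pos : forall x, 0 < Derive f x.
Hypothesis beta1_lt_alpha : beta + 1 < alpha.
Hypothesis beta1_pos : 0 < beta + 1.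
Hypothesis theta_pos : 0 < theta alpha beta gamma.
Hypothesis u_solution : is_solution alpha beta gamma f rho u.

(* (B3) forces gamma + 1 > alpha - beta - 1 > 0. *)
Lemma gamma1_pos : 0 < gamma + 1.
Proof. unfold theta in theta_pos. lra. Qed.

Lemma u_derive (t : R) : 0 < t -> is_derive u t (Derive u t).
Proof. intro Ht. apply Derive_correct. destruct u_solution as (_ & _ & Hd & _). auto. Qed.

Lemma flux_derive (t : R) : 0 < t ->
  is_derive (flux alpha beta u) t (- (Rpower t gamma * exp (f (u t)))).
Proof. destruct u_solution as (_ & _ & _ & _ & Hw). exact (Hw t). Qed.

(* The initial conditions u'(0) = 0 and alpha > 0 make the flux vanish at 0+. *)
Lemma flux_lim_0 : filterlim (flux alpha beta u) (at_right 0) (locally 0).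
Proof.
  destruct u_solution as (_ & _ & _ & Hu' & _).
  pose proof (lim_right_0_mult _ _ 0 0 (Rpower_lim_right_0 alpha ltac:(lra))
    (filterlim_comp _ _ _ (Derive u) (phi beta) _ _ _ Hu' (phi_continuous_0 beta beta1_pos))) as Hlim.
  rewrite Rmult_0_l in Hlim. exact Hlim.
Qed.

(* The flux is nonincreasing from 0, hence nonpositive. *)
Lemma flux_nonpos (t : R) : 0 < t -> flux alpha beta u t <= 0.
Proof.
  intro Ht. rewrite <- (Ropp_involutive (flux _ _ _ t)), <- Ropp_0.
  apply Ropp_le_contravar.
  apply (lim_right_0_le (fun t => - flux alpha beta u t) (fun t => Rpower t gamma * exp (f (u t))) 0 t Ht).
  - intros s Hs. rewrite <- (Ropp_involutive (_ * _)).
    apply (is_derive_opp (flux alpha beta u)), flux_derive. lra.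
  - intros s _. apply Rlt_le, Rmult_lt_0_compat; [apply Rpower_pos | apply exp_pos].
  - pose proof (lim_right_0_opp _ _ flux_lim_0) as Hlim. rewrite Ropp_0 in Hlim. exact Hlim.
Qed.

(* As phi has the sign of its argument, u' <= 0. *)
Lemma u'_nonpos (t : R) : 0 < t -> Derive u t <= 0.
Proof.
  intro Ht. apply Rnot_lt_le. intro Hpos.
  pose proof (flux_nonpos t Ht) as Hw. unfold flux in Hw.
  pose proof (phi_pos beta _ Hpos). pose proof (Rpower_pos t alpha). nra.
Qed.

Lemma u_le_rho (t : R) : 0 < t -> u t <= rho.
Proof.
  intro Ht. destruct u_solution as (_ & Hu & _).
  apply Ropp_le_cancel.
  apply (lim_right_0_le (fun t => - u t) (fun t => - Derive u t) (- rho) t Ht).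
  - intros s Hs. apply (is_derive_opp u), u_derive. lra.
  - intros s Hs. pose proof (u'_nonpos s ltac:(lra)). lra.
  - apply lim_right_0_opp, Hu.
Qed.

(* Since e^{f(u)} <= e^{f(rho)}, integrating the equation bounds the flux below. *)
Lemma flux_lower_bound (t : R) : 0 < t ->
  - (exp (f rho) / (gamma + 1)) * Rpower t (gamma + 1) <= flux alpha beta u t.
Proof.
  intro Ht. pose proof gamma1_pos as Hg.
  set (E := exp (f rho)).
  cut (0 + E / (gamma + 1) * 0 <= flux alpha beta u t + E / (gamma + 1) * Rpower t (gamma + 1)); [lra |].
  apply (lim_right_0_le (fun t => flux alpha beta u t + E / (gamma + 1) * Rpower t (gamma + 1))
           (fun t => - (Rpower t gamma * exp (f (u t))) + E * Rpower t gamma) _ t Ht).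
  - intros s Hs. apply (is_derive_plus (flux alpha beta u)); [apply flux_derive; lra |].
    replace (E * Rpower s gamma) with (E / (gamma + 1) * ((gamma + 1) * Rpower s (gamma + 1 - 1)))
      by (replace (gamma + 1 - 1) with gamma by ring; field; lra).
    apply (is_derive_scal (fun t => Rpower t (gamma + 1))).
    apply is_derive_Reals, derivable_pt_lim_power. lra.
  - intros s Hs.
    assert (exp (f (u s)) <= E).
    { destruct (Rle_lt_or_eq_dec _ _ (u_le_rho s ltac:(lra))) as [Hlt | ->]; [| unfold E; lra].
      apply Rlt_le, exp_increasing, (strictly_increasing_of_pos_derive f); assumption. }
    pose proof (Rpower_pos s gamma). nra.
  - apply lim_right_0_plus; [apply flux_lim_0 |].
    apply lim_right_0_scal, Rpower_lim_right_0. exact Hg.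
Qed.

(* Solving the flux bound for u' gives |u'(t)| <= K t^(a-1), a = theta/(beta+1). *)
Lemma u'_lower_bound (t : R) : 0 < t ->
  - (Rpower (exp (f rho) / (gamma + 1)) (/ (beta + 1))
       * Rpower t (theta alpha beta gamma / (beta + 1) - 1)) <= Derive u t.
Proof.
  intro Ht. pose proof gamma1_pos as Hg.
  set (K := Rpower (exp (f rho) / (gamma + 1)) (/ (beta + 1))).
  assert (HK : 0 < K) by apply Rpower_pos.
  pose proof (Rpower_pos t (theta alpha beta gamma / (beta + 1) - 1)).
  destruct (Rle_lt_or_eq_dec _ _ (u'_nonpos t Ht)) as [Hneg | ->]; [| nra].
  set (x := Derive u t) in *.
  assert (Hax : 0 < Rabs x) by (apply Rabs_pos_lt; lra).
  assert (Hpow : Rpower (Rabs x) (beta + 1)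
                 <= exp (f rho) / (gamma + 1) * Rpower t (gamma + 1 - alpha)).
  { pose proof (flux_lower_bound t Ht) as Hw. unfold flux in Hw. fold x in Hw.
    rewrite phi_neg in Hw by exact Hneg.
    replace (Rpower t (gamma + 1)) with (Rpower t alpha * Rpower t (gamma + 1 - alpha)) in Hw
      by (rewrite <- Rpower_plus; f_equal; ring).
    apply (Rmult_le_reg_l (Rpower t alpha)); [apply Rpower_pos | nra]. }
  assert (Habs : Rabs x <= K * Rpower t (theta alpha beta gamma / (beta + 1) - 1)).
  { replace (Rabs x) with (Rpower (Rpower (Rabs x) (beta + 1)) (/ (beta + 1)))
      by (rewrite Rpower_mult, Rinv_r, Rpower_1; lra).
    replace (theta alpha beta gamma / (beta + 1) - 1) with ((gamma + 1 - alpha) * / (beta + 1))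
      by (unfold theta; field; lra).
    unfold K. rewrite <- Rpower_mult, Rpower_mult_distr
      by (apply Rdiv_lt_0_compat; [apply exp_pos | lra] || apply Rpower_pos).
    apply Rle_Rpower_l; [apply Rlt_le, Rinv_0_lt_compat; lra |].
    split; [apply Rpower_pos | exact Hpow]. }
  rewrite Rabs_left in Habs by lra. lra.
Qed.

(* Integrating once more: rho - u(r) <= (K / a) r^a. *)
Lemma solution_lower_bound (r : R) : 0 < r ->
  rho - Rpower (exp (f rho) / (gamma + 1)) (/ (beta + 1)) / (theta alpha beta gamma / (beta + 1))
        * Rpower r (theta alpha beta gamma / (beta + 1)) <= u r.
Proof.
  intro Hr. destruct u_solution as (_ & Hu & _).
  set (K := Rpower (exp (f rho) / (gamma + 1)) (/ (beta + 1))).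
  set (a := theta alpha beta gamma / (beta + 1)).
  assert (Ha : 0 < a) by (apply Rdiv_lt_0_compat; assumption).
  cut (rho + K / a * 0 <= u r + K / a * Rpower r a); [lra |].
  apply (lim_right_0_le (fun t => u t + K / a * Rpower t a)
           (fun t => Derive u t + K / a * (a * Rpower t (a - 1))) _ r Hr).
  - intros s Hs. apply (is_derive_plus u); [apply u_derive; lra |].
    apply (is_derive_scal (fun t => Rpower t a)).
    apply is_derive_Reals, derivable_pt_lim_power. lra.
  - intros s Hs. pose proof (u'_lower_bound s ltac:(lra)).
    replace (K / a * (a * Rpower s (a - 1))) with (K * Rpower s (a - 1)) by (field; lra).
    fold K a in H. lra.
  - apply lim_right_0_plus; [exact Hu |].
    apply lim_right_0_scal, Rpower_lim_right_0. exact Ha.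
Qed.

End SolutionLowerBound.

Lemma half_line_integral_le (phi psi : R -> R) (v lphi lpsi : R) :
  (forall x, v <= x -> Rabs (phi x) <= psi x) ->
  is_RInt_gen phi (at_point v) (Rbar_locally p_infty) lphi ->
  is_RInt_gen psi (at_point v) (Rbar_locally p_infty) lpsi ->
  Rabs lphi <= lpsi.
Proof.
  intros Hle Hphi Hpsi.
  refine (RInt_gen_norm (Fa := at_point v) (Fb := Rbar_locally p_infty)
            phi psi lphi lpsi _ _ Hphi Hpsi);
    exists (fun a => a = v) (fun b => v < b); try (reflexivity || (exists v; auto)).
  - intros a b -> Hb. simpl. lra.
  - intros a b -> _ x Hx. simpl in Hx. apply Hle. lra.
Qed.

Lemma relative_bounds_close (b x y : R) : 0 < b -> 0 <= x <= / 2 ->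
  (1 - x) * y <= b <= (1 + x) * y -> Rabs (y - b) <= 2 * b * x.
Proof.
  intros Hb Hx [Hlow Hup].
  assert (Hy : 0 < y) by nra.
  assert (Hy2 : y <= 2 * b) by nra.
  apply Rabs_le. split; nra.
Qed.

(* Model of F at infinity: h(v) = e^{-f(v)/(beta+1)} / f'(v). *)
Definition Fapprox (beta : R) (f : R -> R) (v : R) : R :=
  exp (- f v / (beta + 1)) / Derive f v.

(* The quantity q = f''/f'^2 controlling the error of this model. *)
Definition curvature (f : R -> R) (x : R) : R :=
  Derive (Derive f) x / (Derive f x) ^ 2.

Lemma Fint_continuous (beta : R) (f : R -> R) (x : R) :
  ex_derive f x -> continuous (Fint beta f) x.
Proof.
  intro Hd. apply continuity_pt_filterlim. unfold Fint.
  apply (continuity_pt_comp (fun x => - f x / (beta + 1)) exp).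
  - unfold Rdiv. apply continuity_pt_mult;
      [apply continuity_pt_opp, continuity_pt_of_ex_derive, Hd
      | apply continuity_pt_const; intros ? ?; reflexivity].
  - apply derivable_continuous_pt, derivable_pt_exp.
Qed.

Section AsymptoticsOfF.

Variables (beta : R) (f : R -> R).
Hypothesis beta1_pos : 0 < beta + 1.
Hypothesis f_derivable : forall x, ex_derive f x.
Hypothesis f'_derivable : forall x, ex_derive (Derive f) x.
Hypothesis f''_continuous : forall x, continuous (Derive (Derive f)) x.
Hypothesis f'_pos : forall x, 0 < Derive f x.
Hypothesis Fint_integrable : ex_RInt_gen (Fint beta f) (at_point 0) (Rbar_locally p_infty).

Lemma Fcal_correct (v : R) :
  is_RInt_gen (Fint beta f) (at_point v) (Rbar_locally p_infty) (Fcal beta f v).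
Proof.
  destruct Fint_integrable as [l Hl].
  assert (H0v : is_RInt_gen (Fint beta f) (at_point v) (at_point 0) (RInt (Fint beta f) v 0)).
  { apply is_RInt_gen_at_point, (RInt_correct (V := R_CompleteNormedModule)), ex_RInt_continuous.
    intros z _. apply Fint_continuous, f_derivable. }
  pose proof (is_RInt_gen_Chasles _ _ _ _ H0v Hl) as Hv.
  unfold Fcal. rewrite (is_RInt_gen_unique _ _ Hv). exact Hv.
Qed.

Lemma Fapprox_derive (x : R) :
  is_derive (Fapprox beta f) x (- Fint beta f x * (/ (beta + 1) + curvature f x)).
Proof.
  pose proof (f'_pos x). unfold Fapprox, Fint, curvature.
  auto_derive.
  - repeat split; auto. lra.
  - change (fun y : R => f y) with f. change (fun y : R => Derive f y) with (Derive f).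
    unfold Rdiv. field. lra.
Qed.

Lemma Fapprox_derive_continuous (x : R) :
  continuous (fun y => - Fint beta f y * (/ (beta + 1) + curvature f y)) x.
Proof.
  apply (continuous_mult (fun y => - Fint beta f y)).
  - apply (continuous_opp (Fint beta f)), Fint_continuous, f_derivable.
  - apply (continuous_plus (fun _ => / (beta + 1))); [apply continuous_const |].
    apply continuity_pt_filterlim. unfold curvature.
    apply continuity_pt_div.
    + apply continuity_pt_filterlim, f''_continuous.
    + apply (continuity_pt_comp (Derive f) (fun y => y ^ 2));
        [apply continuity_pt_of_ex_derive, f'_derivable
        | apply derivable_continuous_pt, derivable_pt_pow].
    + apply pow_nonzero. pose proof (f'_pos x). lra.
Qed.

(* By (B2), h(v) = (v / e^{f(v)/(beta+1)}) (1 / (v f'(v))) tends to 0. *)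
Lemma Fapprox_lim_infty :
  is_lim (fun x => exp (f x / (beta + 1)) / x) p_infty p_infty ->
  is_lim (fun x => x * Derive f x) p_infty p_infty ->
  is_lim (Fapprox beta f) p_infty 0.
Proof.
  intros Hexp Hxf'.
  assert (H : is_lim (fun x => / (exp (f x / (beta + 1)) / x) * / (x * Derive f x))
                p_infty (Rbar_mult 0 0)).
  { apply is_lim_mult; [apply (is_lim_inv _ _ p_infty); [exact Hexp | discriminate]
                       | apply (is_lim_inv _ _ p_infty); [exact Hxf' | discriminate]
                       | exact I]. }
  simpl in H. rewrite Rmult_0_l in H.
  apply (is_lim_ext_loc _ (Fapprox beta f)) in H; [exact H |].
  exists 0. intros x Hx. unfold Fapprox. pose proof (f'_pos x).
  pose proof (exp_pos (f x / (beta + 1))).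
  replace (- f x / (beta + 1)) with (- (f x / (beta + 1))) by (unfold Rdiv; ring).
  rewrite exp_Ropp. field. repeat split; lra.
Qed.

(* h vanishes at +oo, so integrating -h' over [v, +oo) gives h(v). *)
Lemma Fapprox_integral (v : R) : is_lim (Fapprox beta f) p_infty 0 ->
  is_RInt_gen (fun y => Fint beta f y * (/ (beta + 1) + curvature f y))
    (at_point v) (Rbar_locally p_infty) (Fapprox beta f v).
Proof.
  intro Hlim.
  assert (Hh' : forall x, Derive (Fapprox beta f) x = - Fint beta f x * (/ (beta + 1) + curvature f x))
    by (intro x; apply is_derive_unique, Fapprox_derive).
  assert (HD : is_RInt_gen (Derive (Fapprox beta f)) (at_point v) (Rbar_locally p_infty)
                (0 - Fapprox beta f v)).
  { apply is_RInt_gen_Derive.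
    - apply filter_forall. intros ab x _. eexists. apply Fapprox_derive.
    - apply filter_forall. intros ab x _.
      apply (continuous_ext _ _ x (fun y => eq_sym (Hh' y))), Fapprox_derive_continuous.
    - intros P HP. exact (locally_singleton _ _ HP).
    - exact Hlim. }
  pose proof (is_RInt_gen_opp _ _ HD) as Hopp.
  replace (Fapprox beta f v) with (opp (0 - Fapprox beta f v)) by (rewrite Rminus_0_l; apply Ropp_involutive).
  refine (is_RInt_gen_ext _ _ _ _ Hopp).
  apply filter_forall. intros ab x _. rewrite Hh', <- Ropp_mult_distr_l. apply Ropp_involutive.
Qed.

(* If c <= 1/(beta+1) + q <= d on [v, +oo) with c > 0, comparing the integrand
   -h' = e^{-f/(beta+1)} (1/(beta+1) + q) with that of F gives c F(v) <= h(v) <= d F(v). *)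
Lemma Fcal_bounds (v c d : R) :
  is_lim (Fapprox beta f) p_infty 0 -> 0 < c ->
  (forall x, v <= x -> c <= / (beta + 1) + curvature f x <= d) ->
  c * Fcal beta f v <= Fapprox beta f v <= d * Fcal beta f v.
Proof.
  intros Hlim Hc Hq.
  pose proof (Fapprox_integral v Hlim) as Hh.
  pose proof (Fcal_correct v) as HF.
  assert (Hlow : forall x, v <= x ->
            Rabs (c * Fint beta f x) <= Fint beta f x * (/ (beta + 1) + curvature f x)).
  { intros x Hx. specialize (Hq x Hx). pose proof (exp_pos (- f x / (beta + 1))).
    unfold Fint. rewrite Rabs_pos_eq; nra. }
  assert (Hup : forall x, v <= x ->
            Rabs (Fint beta f x * (/ (beta + 1) + curvature f x)) <= d * Fint beta f x).
  { intros x Hx. specialize (Hq x Hx). pose proof (exp_pos (- f x / (beta + 1))).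
    unfold Fint. rewrite Rabs_pos_eq; nra. }
  split.
  - pose proof (half_line_integral_le _ _ v _ _ Hlow (is_RInt_gen_scal _ c _ HF) Hh) as Hle.
    pose proof (Rle_abs (c * Fcal beta f v)). change (scal c ?a) with (c * a) in Hle. lra.
  - pose proof (half_line_integral_le _ _ v _ _ Hup Hh (is_RInt_gen_scal _ d _ HF)) as Hle.
    pose proof (Rle_abs (Fapprox beta f v)). change (scal d ?a) with (d * a) in Hle. lra.
Qed.

Lemma Ical_Fapprox (v : R) : Ical beta f v * Fapprox beta f v = Fcal beta f v.
Proof.
  unfold Ical, Fapprox. pose proof (f'_pos v). pose proof (exp_pos (f v / (beta + 1))).
  replace (- f v / (beta + 1)) with (- (f v / (beta + 1))) by (unfold Rdiv; ring).
  rewrite exp_Ropp. field. lra.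
Qed.

Lemma Ical_bounds (v c d : R) :
  is_lim (Fapprox beta f) p_infty 0 -> 0 < c ->
  (forall x, v <= x -> c <= / (beta + 1) + curvature f x <= d) ->
  c * Ical beta f v <= 1 <= d * Ical beta f v.
Proof.
  intros Hlim Hc Hq.
  pose proof (Fcal_bounds v c d Hlim Hc Hq) as Hb. rewrite <- Ical_Fapprox in Hb.
  assert (Hh : 0 < Fapprox beta f v) by (apply Rdiv_lt_0_compat; [apply exp_pos | apply f'_pos]).
  split; apply (Rmult_le_reg_r (Fapprox beta f v)); nra.
Qed.

(* The asymptotics I(v) -> beta + 1, provided q = f''/f'^2 -> 0: once |q| < delta on
   [v, +oo), Ical_bounds pins I(v) within 2 (beta + 1)^2 delta of beta + 1. *)
Lemma Ical_lim_infty :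
  is_lim (Fapprox beta f) p_infty 0 -> is_lim (curvature f) p_infty 0 ->
  is_lim (Ical beta f) p_infty (beta + 1).
Proof.
  intros Hlim Hq. apply is_lim_spec. intro eps. pose proof (cond_pos eps) as Heps.
  set (b := beta + 1) in *.
  set (delta := Rmin (/ (2 * b)) (eps / (4 * (b * b)))).
  assert (Hdelta : 0 < delta).
  { apply Rmin_glb_lt; [apply Rinv_0_lt_compat | apply Rdiv_lt_0_compat]; nra. }
  assert (Hbd1 : b * delta <= / 2).
  { replace (/ 2) with (b * / (2 * b)) by (field; lra).
    apply Rmult_le_compat_l; [lra | apply Rmin_l]. }
  assert (Hbd2 : 2 * b * (b * delta) < eps).
  { apply Rle_lt_trans with (2 * (b * b) * (eps / (4 * (b * b)))); [| field_simplify; nra].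
    replace (2 * b * (b * delta)) with (2 * (b * b) * delta) by ring.
    apply Rmult_le_compat_l; [nra | apply Rmin_r]. }
  destruct (proj2 (is_lim_spec _ _ _) Hq (mkposreal delta Hdelta)) as [U HU].
  exists U. intros v Hv.
  destruct (Ical_bounds v (/ b - delta) (/ b + delta) Hlim) as [Hlow Hup].
  - apply Rmult_lt_reg_l with b; [lra |].
    replace (b * (/ b - delta)) with (1 - b * delta) by (field; lra). lra.
  - intros x Hx. specialize (HU x ltac:(lra)).
    change (Rabs (curvature f x - 0) < delta) in HU. rewrite Rminus_0_r in HU.
    apply Rabs_lt_between in HU. fold b. lra.
  - eapply Rle_lt_trans; [apply (relative_bounds_close b (b * delta)) | exact Hbd2]; [lra | nra |].
    split.
    + replace ((1 - b * delta) * Ical beta f v) with (b * ((/ b - delta) * Ical beta f v))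
        by (field; lra). nra.
    + replace ((1 + b * delta) * Ical beta f v) with (b * ((/ b + delta) * Ical beta f v))
        by (field; lra). nra.
Qed.

End AsymptoticsOfF.

Section InverseFunction.

Variables (f g : R -> R).
Hypothesis f_derivable : forall x, ex_derive f x.
Hypothesis f'_pos : forall x, 0 < Derive f x.
Hypothesis g_left_inverse : forall x, g (f x) = x.

Lemma inverse_on_image (a b t : R) : a <= b -> f a <= t <= f b ->
  f (g t) = t /\ a <= g t <= b.
Proof.
  intros Hab Ht.
  assert (Hle : f a <= f b).
  { destruct (Req_dec a b) as [-> | Hne]; [lra |].
    apply Rlt_le, (strictly_increasing_of_pos_derive f); auto; lra. }
  destruct (IVT_gen f a b t) as [y [Hy <-]].
  - intro x. apply continuity_pt_of_ex_derive, f_derivable.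
  - rewrite Rmin_left, Rmax_right; lra.
  - rewrite Rmin_left, Rmax_right in Hy by lra. rewrite g_left_inverse. auto.
Qed.

Lemma image_neighbourhood (y : R) :
  locally (f y) (fun t => f (g t) = t /\ y - 1 <= g t <= y + 1).
Proof.
  assert (Hinc := strictly_increasing_of_pos_derive f f_derivable f'_pos).
  assert (H1 := Hinc (y - 1) y ltac:(lra)). assert (H2 := Hinc y (y + 1) ltac:(lra)).
  assert (Hd : 0 < Rmin (f y - f (y - 1)) (f (y + 1) - f y)) by (apply Rmin_glb_lt; lra).
  exists (mkposreal _ Hd). intros t Ht. change (Rabs (t - f y) < Rmin (f y - f (y - 1)) (f (y + 1) - f y)) in Ht.
  pose proof (Rmin_l (f y - f (y - 1)) (f (y + 1) - f y)).
  pose proof (Rmin_r (f y - f (y - 1)) (f (y + 1) - f y)).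
  apply Rabs_lt_between in Ht. apply inverse_on_image; lra.
Qed.

Lemma inverse_continuous (y : R) : continuity_pt g (f y).
Proof.
  apply (Ranalysis5.continuity_pt_recip_interv f g (y - 1) (y + 1)); [lra | | | | |].
  - intros a b Ha Hab Hb. apply (strictly_increasing_of_pos_derive f); auto.
  - intros t H1 H2. eapply proj1, (inverse_on_image (y - 1) (y + 1)); unfold id; lra.
  - intros t H1 H2. eapply proj2, (inverse_on_image (y - 1) (y + 1)); lra.
  - intros a _. apply continuity_pt_of_ex_derive, f_derivable.
  - split; apply (strictly_increasing_of_pos_derive f); auto; lra.
Qed.

Lemma inverse_derive (y : R) : is_derive g (f y) (/ Derive f y).
Proof.
  assert (Hinc := strictly_increasing_of_pos_derive f f_derivable f'_pos).
  assert (Prf : forall a, g (f (y - 1)) <= a <= g (f (y + 1)) -> derivable_pt f a)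
    by (intros a _; exists (Derive f a); apply is_derive_Reals, Derive_correct, f_derivable).
  assert (Hrange : g (f (y - 1)) <= g (f y) <= g (f (y + 1))) by (rewrite !g_left_inverse; lra).
  apply is_derive_Reals.
  pose proof (Ranalysis5.derivable_pt_lim_recip_interv f g (f (y - 1)) (f (y + 1)) (f y) Prf
    (inverse_continuous y) (Hinc (y - 1) (y + 1) ltac:(lra))
    (conj (Hinc (y - 1) y ltac:(lra)) (Hinc y (y + 1) ltac:(lra))) Hrange) as H.
  rewrite Derive_Reals, g_left_inverse in H.
  replace (/ Derive f y) with (1 / Derive f y) by (field; specialize (f'_pos y); lra).
  apply H.
  - intros t Ht. eapply proj1, (inverse_on_image (y - 1) (y + 1)); unfold id; lra.
  - specialize (f'_pos y). lra.
Qed.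

Lemma inverse_log_derivative (y : R) : ex_derive (Derive f) y ->
  Derive (Derive g) (f y) / Derive g (f y) = - (Derive (Derive f) y / (Derive f y) ^ 2).
Proof.
  intro Hf'.
  assert (Hg' : forall x, Derive g (f x) = / Derive f x) by (intro; apply is_derive_unique, inverse_derive).
  assert (Hext : Derive (Derive g) (f y) = Derive (fun t => / Derive f (g t)) (f y)).
  { apply Derive_ext_loc. eapply filter_imp; [| exact (image_neighbourhood y)].
    intros t [Ht _]. rewrite <- Ht at 1. rewrite Hg'. reflexivity. }
  assert (Hchain : is_derive (fun t => / Derive f (g t)) (f y)
                     (scal (/ Derive f y) (- Derive (Derive f) y / Derive f y ^ 2))).
  { apply (is_derive_comp (fun z => / Derive f z) g); [| apply inverse_derive].
    rewrite g_left_inverse. apply is_derive_inv; [apply Derive_correct, Hf' |].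
    specialize (f'_pos y). lra. }
  rewrite Hext, Hg', (is_derive_unique _ _ _ Hchain : Derive (fun t : R => / Derive f (g t)) (f y) = _).
  change (scal ?a ?b) with (a * b). specialize (f'_pos y). field. lra.
Qed.

End InverseFunction.

(* Through g'' / g' (f x) = - q(x) and f -> +oo, the hypothesis on g gives q -> 0. *)
Lemma curvature_lim_infty (f g : R -> R) :
  (forall x, ex_derive f x) -> (forall x, ex_derive (Derive f) x) ->
  (forall x, 0 < Derive f x) -> is_lim f p_infty p_infty ->
  (forall x, g (f x) = x) ->
  is_lim (fun t => Derive (Derive g) t / Derive g t) p_infty 0 ->
  is_lim (curvature f) p_infty 0.
Proof.
  intros Hd Hd2 Hpos Hf Hg Hlim.
  assert (H := is_lim_comp _ f p_infty 0 p_infty Hlim Hf ltac:(exists 0; intros; discriminate)).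
  apply is_lim_opp in H. simpl in H. rewrite Ropp_0 in H.
  refine (is_lim_ext _ _ _ _ _ H). intro y.
  rewrite (inverse_log_derivative f g Hd Hpos Hg y (Hd2 y)). apply Ropp_involutive.
Qed.

Section RescaledSolution.

Variables (alpha beta gamma : R) (f : R -> R) (u : R -> R -> R).
Hypothesis f_derivable : forall x, ex_derive f x.
Hypothesis f'_pos : forall x, 0 < Derive f x.
Hypothesis beta1_lt_alpha : beta + 1 < alpha.
Hypothesis beta1_pos : 0 < beta + 1.
Hypothesis theta_pos : 0 < theta alpha beta gamma.
Hypothesis u_solution : forall rho, is_solution alpha beta gamma f rho (u rho).

Definition drop_constant : R :=
  Rpower (/ (gamma + 1)) (/ (beta + 1)) / (theta alpha beta gamma / (beta + 1)) / Fcal1 beta 1.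

(* In the variable s = r / eps_rho the bound of solution_lower_bound becomes
   rho - u(eps_rho s) <= drop_constant s^a I(rho) / f'(rho). *)
Lemma rescaled_drop (rho s : R) : 0 < Fcal beta f rho -> 0 < s ->
  rho - u rho (eps_rho alpha beta gamma f rho * s)
  <= drop_constant * Rpower s (theta alpha beta gamma / (beta + 1))
     * (Ical beta f rho / Derive f rho).
Proof.
  intros HF Hs.
  set (a := theta alpha beta gamma / (beta + 1)).
  set (K0 := Rpower (/ (gamma + 1)) (/ (beta + 1))).
  assert (Hg1 : 0 < gamma + 1) by (apply (gamma1_pos alpha beta gamma); assumption).
  assert (HF1 : 0 < Fcal1 beta 1) by (apply Rmult_lt_0_compat; [lra | apply exp_pos]).
  assert (Heps : 0 < eps_rho alpha beta gamma f rho) by apply Rpower_pos.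
  pose proof (solution_lower_bound alpha beta gamma rho f (u rho) f_derivable f'_pos
                beta1_lt_alpha beta1_pos theta_pos (u_solution rho)
                (eps_rho alpha beta gamma f rho * s) ltac:(nra)) as Hlow.
  fold a in Hlow.
  assert (Hscale : Rpower (eps_rho alpha beta gamma f rho * s) a
                   = Fcal beta f rho / Fcal1 beta 1 * Rpower s a).
  { rewrite <- Rpower_mult_distr by assumption. f_equal.
    unfold eps_rho. rewrite Rpower_mult.
    replace ((beta + 1) / theta alpha beta gamma * a) with 1 by (unfold a; field; lra).
    apply Rpower_1, Rdiv_lt_0_compat; assumption. }
  assert (Hexp : Rpower (exp (f rho) / (gamma + 1)) (/ (beta + 1)) = exp (f rho / (beta + 1)) * K0).
  { unfold Rdiv at 1. rewrite <- Rpower_mult_distr by (apply exp_pos || apply Rinv_0_lt_compat; lra).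
    unfold K0. f_equal. unfold Rpower. rewrite ln_exp. f_equal. unfold Rdiv. ring. }
  assert (HI : Ical beta f rho / Derive f rho = exp (f rho / (beta + 1)) * Fcal beta f rho).
  { unfold Ical. pose proof (f'_pos rho). field. lra. }
  rewrite Hscale, Hexp in Hlow. rewrite HI. unfold drop_constant. fold K0 a.
  assert (Ha : 0 < a) by (apply Rdiv_lt_0_compat; assumption).
  replace (K0 / a / Fcal1 beta 1 * Rpower s a * (exp (f rho / (beta + 1)) * Fcal beta f rho))
    with (exp (f rho / (beta + 1)) * K0 / a * (Fcal beta f rho / Fcal1 beta 1 * Rpower s a))
    by (field; lra).
  lra.
Qed.

Lemma rescaled_drop_small (S rho s : R) :
  0 < Ical beta f rho < 2 * (beta + 1) ->
  2 * (drop_constant * Rpower S (theta alpha beta gamma / (beta + 1)) * (2 * (beta + 1)))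
    < rho * Derive f rho ->
  0 < s <= S -> rho / 2 < u rho (eps_rho alpha beta gamma f rho * s).
Proof.
  intros HI Hlarge Hs.
  set (a := theta alpha beta gamma / (beta + 1)) in *.
  set (C := drop_constant * Rpower S a * (2 * (beta + 1))) in *.
  assert (Ha : 0 < a) by (apply Rdiv_lt_0_compat; assumption).
  assert (Hf' := f'_pos rho).
  assert (HF : 0 < Fcal beta f rho).
  { rewrite <- (Ical_Fapprox beta f f'_pos rho). apply Rmult_lt_0_compat; [lra |].
    apply Rdiv_lt_0_compat; [apply exp_pos | exact Hf']. }
  assert (HD : 0 < drop_constant).
  { apply Rdiv_lt_0_compat; [apply Rdiv_lt_0_compat; [apply Rpower_pos | exact Ha] |].
    apply Rmult_lt_0_compat; [lra | apply exp_pos]. }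
  assert (Hbound : drop_constant * Rpower s a * (Ical beta f rho / Derive f rho) <= C / Derive f rho).
  { assert (Rpower s a <= Rpower S a) by (apply Rle_Rpower_l; lra).
    unfold C, Rdiv. rewrite !Rmult_assoc. apply Rmult_le_compat_l; [lra |].
    pose proof (Rpower_pos s a). pose proof (Rinv_0_lt_compat _ Hf').
    apply Rmult_le_compat; nra. }
  assert (Hsmall : C / Derive f rho < rho / 2).
  { apply (Rmult_lt_reg_r (Derive f rho)); [exact Hf' |].
    unfold Rdiv. rewrite Rmult_assoc, Rinv_l by lra. lra. }
  pose proof (rescaled_drop rho s HF ltac:(lra)) as Hdrop. fold a in Hdrop. lra.
Qed.

Lemma rescaled_solution_unbounded (S M : R) :
  is_lim (fun x => x * Derive f x) p_infty p_infty ->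
  is_lim (Ical beta f) p_infty (beta + 1) ->
  exists R1, forall rho, R1 < rho -> forall s, 0 <= s <= S ->
    M < u rho (eps_rho alpha beta gamma f rho * s).
Proof.
  intros Hxf' HI.
  destruct (proj2 (is_lim_spec _ _ _) HI (mkposreal _ beta1_pos)) as [U1 HU1].
  destruct (proj2 (is_lim_spec _ _ _) Hxf'
    (2 * (drop_constant * Rpower S (theta alpha beta gamma / (beta + 1)) * (2 * (beta + 1)))))
    as [U2 HU2].
  exists (Rmax (Rmax U1 U2) (2 * Rabs M)). intros rho Hrho s Hs.
  pose proof (Rmax_l (Rmax U1 U2) (2 * Rabs M)). pose proof (Rmax_r (Rmax U1 U2) (2 * Rabs M)).
  pose proof (Rmax_l U1 U2). pose proof (Rmax_r U1 U2).
  pose proof (Rle_abs M). pose proof (Rabs_pos M).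
  destruct (Req_dec s 0) as [-> | Hs0].
  - rewrite Rmult_0_r. destruct (u_solution rho) as [-> _]. lra.
  - assert (HIrho : 0 < Ical beta f rho < 2 * (beta + 1)).
    { specialize (HU1 rho ltac:(lra)). simpl in HU1. apply Rabs_lt_between in HU1. lra. }
    pose proof (rescaled_drop_small S rho s HIrho (HU2 rho ltac:(lra)) ltac:(lra)). lra.
Qed.

End RescaledSolution.

Theorem mainTheorem17 (alpha beta gamma : R) (f g : R -> R) (u : R -> R -> R) :
  (* f in C^2 (in particular (B1): f in C^1) *)
  (forall x, ex_derive f x) ->
  (forall x, ex_derive (Derive f) x) ->
  (forall x, continuous (Derive (Derive f)) x) ->
  (* (B1) *)
  (forall x, 0 < Derive f x) ->
  is_lim f p_infty p_infty ->
  (* (B2) *)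
  is_lim (fun x => exp (f x / (beta + 1)) / x) p_infty p_infty ->
  is_lim (fun x => x * Derive f x) p_infty p_infty ->
  (* (B3) *)
  beta + 1 < alpha -> 0 < beta + 1 -> 0 < theta alpha beta gamma ->
  (* \int_0^{+oo} e^{-f(s)/(beta+1)} ds < oo *)
  ex_RInt_gen (Fint beta f) (at_point 0) (Rbar_locally p_infty) ->
  (* g = f^{-1}, and g''(t)/g'(t) -> 0 as t -> +oo *)
  (forall x, g (f x) = x) ->
  is_lim (fun t => Derive (Derive g) t / Derive g t) p_infty 0 ->
  (* u(., rho) is the solution of the initial value problem *)
  (forall rho, is_solution alpha beta gamma f rho (u rho)) ->
  (* I(u(eps_rho s, rho)) -> beta+1 uniformly for s in compacts of [0,oo) *)
  forall S, 0 <= S ->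
  forall eps, 0 < eps ->
  exists R0, forall rho, R0 < rho -> forall s, 0 <= s <= S ->
    Rabs (Ical beta f (u rho (eps_rho alpha beta gamma f rho * s)) - (beta + 1)) < eps.
Proof.
  intros Hd Hd2 Hc2 Hpos Hf Hexp Hxf' Hab Hb Hth Hint Hg Hglim Hsol S _ eps Heps.
  assert (HI : is_lim (Ical beta f) p_infty (beta + 1)).
  { apply (Ical_lim_infty beta f Hb Hd Hd2 Hc2 Hpos Hint).
    - apply Fapprox_lim_infty; assumption.
    - apply (curvature_lim_infty f g); assumption. }
  destruct (proj2 (is_lim_spec _ _ _) HI (mkposreal eps Heps)) as [U HU].
  destruct (rescaled_solution_unbounded alpha beta gamma f u Hd Hpos Hab Hb Hth Hsol S U Hxf' HI)
    as [R0 HR0].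
  exists R0. intros rho Hrho s Hs. apply HU, HR0; assumption.
Qed.
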